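(* Let $R$ be the ring of integers of a nonarchimedean local field of characteristic not $2$ in which $2$ is a prime element, and let $L\cong\langle 1,-1\rangle$ be a binary $R$-lattice. Then $Q(L) = R^\times\cup 4R$, and \[ Q^\ast(L) = \begin{cases} R^\times\cup 4R & \text{if } R\ne\mathbb{Z}_2,\\ R^\times\cup 8R & \text{if } R=\mathbb{Z}_2.\end{cases} \]
   Context: $\langle 1,-1\rangle$ is the $R$-lattice with Gram matrix $\operatorname{diag}(1,-1)$, with quadratic form $Q(v)=B(v,v)$. $Q(L)=\{Q(v):v\in L\}$ and $Q^\ast(L)=\{Q(v): v\in L \text{ primitive}\}$, where $v$ is primitive if $Rv$ is a direct summand of $L$. *)

From HB Require Import structures.
From mathcomp Require Import all_boot all_order all_algebra.
Set Implicit Arguments. Unset Strict Implicit. Unset Printing Implicit Defensive.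
Import Order.TTheory GRing.Theory Num.Theory.
Local Open Scope ring_scope.

Definition dvdr (R : comPzRingType) (a b : R) : Prop := exists c : R, b = a * c.

Definition prime_elt (R : idomainType) (p : R) : Prop :=
  p != 0 /\ p \isn't a GRing.unit /\
  forall a b : R, dvdr p (a * b) -> dvdr p a \/ dvdr p b.

Definition uniformizer (R : idomainType) (pi : R) : Prop :=
  pi != 0 /\ pi \isn't a GRing.unit /\
  forall x : R, x != 0 -> exists (u : R) (n : nat), u \is a GRing.unit /\ x = u * pi ^+ n.

(* R is a complete discrete valuation ring with finite residue field, i.e.
   the valuation ring (ring of integers) of a nonarchimedean local field. *)
Definition local_ring_of_integers (R : idomainType) : Prop :=
  exists pi : R,
    uniformizer pi /\
    (* completeness for the pi-adic topology *)
    (forall x : nat -> R,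
        (forall n, dvdr (pi ^+ n) (x n.+1 - x n)) ->
        exists l : R, forall n, dvdr (pi ^+ n) (l - x n)) /\
    (* finite residue field R / pi R *)
    (exists s : seq R, forall x : R, exists2 y, y \in s & dvdr pi (x - y)).

Definition char_not_2 (R : idomainType) : Prop := (2 : R) != 0.

(* R = Z_2 : for R as above with 2 a prime element (so R is unramified over
   Z_2), R is isomorphic to Z_2 iff its residue field R/2R is F_2. *)
Definition is_Z2 (R : idomainType) : Prop :=
  forall x : R, dvdr 2 x \/ dvdr 2 (x - 1).

(* The free lattice R^2 with Gram matrix G, quadratic form Q(v) = B(v,v). *)
Definition qf (R : comPzRingType) (G : 'M[R]_2) (v : 'rV[R]_2) : R :=
  (v *m G *m v^T) 0 0.

Definition diag1m1 (R : comPzRingType) : 'M[R]_2 :=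
  diag_mx (\row_(i < 2) (-1) ^+ i).

Definition isometric_to_1m1 (R : comUnitRingType) (G : 'M[R]_2) : Prop :=
  exists P : 'M[R]_2, P \in unitmx /\ G = P *m diag1m1 R *m P^T.

Definition submodule (R : comPzRingType) (N : 'rV[R]_2 -> Prop) : Prop :=
  N 0 /\ (forall u w, N u -> N w -> N (u + w)) /\
  (forall (r : R) u, N u -> N (r *: u)).

(* v is primitive: R v is a direct summand of L = R^2. *)
Definition primitive (R : comPzRingType) (v : 'rV[R]_2) : Prop :=
  exists N : 'rV[R]_2 -> Prop, submodule N /\
    (forall w, exists (r : R) (n : 'rV[R]_2), N n /\ w = r *: v + n) /\
    (forall r : R, N (r *: v) -> r *: v = 0).

Definition QL (R : comPzRingType) (G : 'M[R]_2) (a : R) : Prop :=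
  exists v : 'rV[R]_2, qf G v = a.
Definition QLstar (R : comPzRingType) (G : 'M[R]_2) (a : R) : Prop :=
  exists v : 'rV[R]_2, primitive v /\ qf G v = a.

(* In a basis where the Gram matrix is diag(1,-1), Q(x, y) = x^2 - y^2 = (x - y)(x + y)
   with x + y = (x - y) + 2y.  As 2 is prime in the discrete valuation ring R, odd elements
   are units, so Q(x, y) is a unit if x - y is odd and lies in 4R otherwise.  Conversely
   4b = Q(b + 1, b - 1); and squaring is injective, hence (the residue field being finite)
   surjective, modulo 2, so every unit is a = u^2 + 2k = Q(u + k/u, k/u).
   Over a domain a nonzero vector spans a direct summand iff it is unimodular, i.e. here iff
   one of its coordinates is odd.  The representations above are primitive, except
   (b + 1, b - 1) when b = 1 mod 2; then (c + b/c, b/c - c) works for any c with c and c - 1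
   odd, which exists unless R/2R = F_2.  Over Z_2 a primitive vector with x - y = 2s has
   y = 1 mod 2 and s(s + 1) even, so Q(x, y) = 4s(s + y) lies in 8R, while
   8b = Q(2b + 1, 2b - 1). *)

From HB Require Import structures.
From mathcomp Require Import all_boot all_order all_algebra ring.
From mathcomp Require Import boolp.
Set Implicit Arguments. Unset Strict Implicit. Unset Printing Implicit Defensive.
Import Order.TTheory GRing.Theory Num.Theory.
Local Open Scope ring_scope.

Section Divisibility.
Variable R : comPzRingType.
Implicit Types d x y : R.

Lemma dvdrr d : dvdr d d. Proof. by exists 1; rewrite mulr1. Qed.

Lemma dvdr0 d : dvdr d 0. Proof. by exists 0; rewrite mulr0. Qed.

Lemma dvdr_trans x d y : dvdr d x -> dvdr x y -> dvdr d y.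
Proof. by case=> a -> [b ->]; exists (a * b); rewrite mulrA. Qed.

Lemma dvdr_mulr d x y : dvdr d x -> dvdr d (x * y).
Proof. by case=> a ->; exists (a * y); rewrite mulrA. Qed.

Lemma dvdr_mull d x y : dvdr d y -> dvdr d (x * y).
Proof. by rewrite mulrC; apply: dvdr_mulr. Qed.

Lemma dvdr_add d x y : dvdr d x -> dvdr d y -> dvdr d (x + y).
Proof. by case=> a -> [b ->]; exists (a + b); rewrite mulrDr. Qed.

Lemma dvdr_sub d x y : dvdr d x -> dvdr d y -> dvdr d (x - y).
Proof. by case=> a -> [b ->]; exists (a - b); rewrite mulrBr. Qed.

Lemma dvdr_subC d x y : dvdr d (x - y) -> dvdr d (y - x).
Proof. by case=> c xy_eq; exists (- c); rewrite mulrN -xy_eq opprB. Qed.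

End Divisibility.

Lemma dvdr1 (R : comUnitRingType) (d : R) : dvdr d 1 <-> d \is a GRing.unit.
Proof.
split=> [[c c_inv] | d_unit]; last by exists d^-1; rewrite divrr.
by apply/unitrP; exists c; rewrite mulrC -c_inv.
Qed.

Section PrimeElement.
Variables (R : idomainType) (p : R).
Hypothesis p_prime : prime_elt p.

Lemma prime_nonunit : p \isn't a GRing.unit.
Proof. by case: p_prime => _ []. Qed.

Lemma prime_dvdrM x y : dvdr p (x * y) -> dvdr p x \/ dvdr p y.
Proof. by case: p_prime => _ [_]; apply. Qed.

Lemma prime_ndvdr_unit u : u \is a GRing.unit -> ~ dvdr p u.
Proof.
move=> u_unit /dvdr_trans/(_ (proj2 (dvdr1 u) u_unit))/dvdr1.
exact/negP/prime_nonunit.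
Qed.

Lemma prime_dvdrX x n : dvdr p (x ^+ n) -> dvdr p x.
Proof.
elim: n => [|n IHn]; first by rewrite expr0 => /dvdr1 p_unit; case/negP: prime_nonunit.
by rewrite exprS => /prime_dvdrM [|/IHn].
Qed.

Lemma prime_dvdr_uniformizer (pi : R) : uniformizer pi -> dvdr p pi.
Proof.
case=> _ [_ /(_ p (proj1 p_prime)) [u [n [u_unit p_eq]]]].
have : dvdr p (u * pi ^+ n) by rewrite -p_eq; apply: dvdrr.
by case/prime_dvdrM => [/(prime_ndvdr_unit u_unit)|/prime_dvdrX].
Qed.

Lemma uniformizer_ndvdr_unit (pi x : R) :
  uniformizer pi -> ~ dvdr p x -> x \is a GRing.unit.
Proof.
move=> pi_unif p_ndvd_x; have p_dvd_pi := prime_dvdr_uniformizer pi_unif.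
have x_neq0 : x != 0 by apply: contra_notN p_ndvd_x => /eqP ->; apply: dvdr0.
case: pi_unif => _ [_ /(_ x x_neq0) [u [[|n] [u_unit x_eq]]]].
  by rewrite x_eq expr0 mulr1.
by case: p_ndvd_x; rewrite x_eq exprSr; apply/dvdr_mull/dvdr_mull.
Qed.

End PrimeElement.

Section FiniteResidues.
Variables (R : comPzRingType) (p : R) (s : seq R).
Hypothesis s_complete : forall x, exists2 y, y \in s & dvdr p (x - y).

Let residue x := nth 0 s (find (fun y => `[< dvdr p (x - y) >]) s).

Let residue_spec x : residue x \in s /\ dvdr p (x - residue x).
Proof.
have [y y_s x_y] := s_complete x.
have has_x : has (fun y => `[< dvdr p (x - y) >]) s.
  by apply/hasP; exists y => //; apply/asboolP.
by split; [apply/mem_nth; rewrite -has_find | apply/asboolP/(nth_find 0 has_x)].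
Qed.

Let residue_eqP x y : residue x = residue y <-> dvdr p (x - y).
Proof.
split=> [eq_xy | x_y].
  have -> : x - y = (x - residue x) - (y - residue y) by rewrite eq_xy; ring.
  by apply: dvdr_sub; apply: (residue_spec _).2.
congr nth; apply: eq_find => z; apply/asboolP/asboolP => [x_z | y_z].
  by rewrite (_ : y - z = (x - z) - (x - y)); [apply: dvdr_sub | ring].
by rewrite (_ : x - z = (x - y) + (y - z)); [apply: dvdr_add | ring].
Qed.

Lemma residue_surj (f : R -> R) :
    (forall x y, dvdr p (f x - f y) -> dvdr p (x - y)) ->
  forall a, exists u, dvdr p (a - f u).
Proof.
move=> f_inj a.
pose S := undup (map residue s).
have residue_S x : residue x \in S.
  have [x_s /dvdr_subC/residue_eqP <-] := residue_spec x.
  by rewrite mem_undup; apply: map_f.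
have residue_id y : y \in S -> residue y = y.
  by rewrite mem_undup => /mapP [z _ ->]; apply/residue_eqP/dvdr_subC/(residue_spec z).2.
have g_inj : {in S &, injective (residue \o f)}.
  by move=> y z y_S z_S /residue_eqP/f_inj/residue_eqP; rewrite !residue_id.
have gS_sub : {subset map (residue \o f) S <= S}.
  by move=> _ /mapP [y _ ->]; apply: residue_S.
have gS_uniq : uniq (map (residue \o f) S) by rewrite map_inj_in_uniq ?undup_uniq.
have [_ gS_eq] := uniq_min_size gS_uniq gS_sub (eq_leq (esym (size_map _ _))).
have /mapP [u _ /residue_eqP a_fu] : residue a \in map (residue \o f) S by rewrite gS_eq.
by exists u.
Qed.

End FiniteResidues.

Definition row2 (R : nmodType) (x y : R) : 'rV[R]_2 := \row_j [:: x; y]`_j.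

Lemma mulmx_rV2_cV2 (R : pzSemiRingType) (v : 'rV[R]_2) (c : 'cV[R]_2) :
  (v *m c) 0 0 = v 0 0 * c 0 0 + v 0 1 * c 1 0.
Proof.
rewrite !mxE !big_ord_recl big_ord0 addr0.
by congr (_ + _ * _); congr (_ _ _); apply/val_inj.
Qed.

Definition unimodular (R : pzSemiRingType) (v : 'rV[R]_2) : Prop :=
  exists c : 'cV[R]_2, (v *m c) 0 0 = 1.

Lemma primitiveP (R : idomainType) (v : 'rV[R]_2) : primitive v <-> v = 0 \/ unimodular v.
Proof.
split=> [[N [[N_0 [N_add N_scale]] [decomp N_trivial]]] | [-> | [c vc1]]].
- have [-> | v_neq0] := eqVneq v 0; [by left | right].
  have e_decomp (j : 'I_2) : exists rn : R * 'rV[R]_2,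
      N rn.2 /\ delta_mx 0 j = rn.1 *: v + rn.2.
    by have [r [n e_eq]] := decomp (delta_mx 0 j); exists (r, n).
  have [rn e_eq] := fin_all_exists e_decomp.
  pose m := \sum_j v 0 j *: (rn j).2.
  have Nm : N m by apply: (big_ind N) => // j _; apply/N_scale/(e_eq j).1.
  exists (\col_j (rn j).1).
  have v_eq : v = (v *m \col_j (rn j).1) 0 0 *: v + m.
    rewrite {1}[v]row_sum_delta mxE scaler_suml -big_split /=.
    by apply: eq_bigr => j _; rewrite (e_eq j).2 scalerDr scalerA mxE.
  have : (1 - (v *m \col_j (rn j).1) 0 0) *: v = 0.
    by apply: N_trivial; rewrite scalerBl scale1r {1}v_eq addrC addKr.
  by move/eqP; rewrite scalemx_eq0 (negbTE v_neq0) orbF subr_eq0 => /eqP <-.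
- exists (fun _ => True); split; first by do !split.
  split=> [w | r _]; last by rewrite scaler0.
  by exists 0, w; rewrite scale0r add0r.
- exists (fun w => (w *m c) 0 0 = 0); split.
    split; first by rewrite mul0mx mxE.
    split=> [u w uc0 wc0 | r u uc0]; first by rewrite mulmxDl mxE uc0 wc0 addr0.
    by rewrite -scalemxAl mxE uc0 mulr0.
  split=> [w | r].
    exists ((w *m c) 0 0), (w - (w *m c) 0 0 *: v); split; last by rewrite addrC subrK.
    by rewrite mulmxBl -scalemxAl (mx11_scalar (v *m c)) vc1 !mxE /= mulr1 subrr.
  by rewrite -(scalemxAl r v c) mxE vc1 mulr1 => ->; rewrite scale0r.
Qed.

Lemma unimodular_mulmx (R : comUnitRingType) (v : 'rV[R]_2) (P : 'M[R]_2) :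
  P \in unitmx -> unimodular (v *m P) <-> unimodular v.
Proof.
move=> P_unit; split=> [[c vPc1] | [c vc1]].
  by exists (P *m c); rewrite mulmxA.
by exists (invmx P *m c); rewrite mulmxA mulmxK.
Qed.

Lemma primitive_mulmx (R : idomainType) (v : 'rV[R]_2) (P : 'M[R]_2) :
  P \in unitmx -> primitive (v *m P) <-> primitive v.
Proof.
move=> P_unit; rewrite !primitiveP unimodular_mulmx //.
suff -> : (v *m P = 0) <-> (v = 0) by [].
by split=> [vP0 | ->]; [rewrite -(mulmxK P_unit v) vP0 mul0mx | rewrite mul0mx].
Qed.

Lemma qf_mulmx (R : comPzRingType) (G P : 'M[R]_2) (v : 'rV[R]_2) :
  qf (P *m G *m P^T) v = qf G (v *m P).
Proof. by rewrite /qf trmx_mul !mulmxA. Qed.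

Lemma QL_isometry (R : comUnitRingType) (G P : 'M[R]_2) (a : R) :
  P \in unitmx -> QL (P *m G *m P^T) a <-> QL G a.
Proof.
move=> P_unit; split=> [[v <-] | [w <-]]; first by exists (v *m P); rewrite qf_mulmx.
by exists (w *m invmx P); rewrite qf_mulmx mulmxKV.
Qed.

Lemma QLstar_isometry (R : idomainType) (G P : 'M[R]_2) (a : R) :
  P \in unitmx -> QLstar (P *m G *m P^T) a <-> QLstar G a.
Proof.
move=> P_unit; split=> [[v [v_prim <-]] | [w [w_prim <-]]].
  by exists (v *m P); rewrite qf_mulmx primitive_mulmx.
by exists (w *m invmx P); rewrite qf_mulmx mulmxKV // -(primitive_mulmx _ P_unit) mulmxKV.
Qed.

Lemma qf_diag1m1 (R : comPzRingType) (v : 'rV[R]_2) :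
  qf (diag1m1 R) v = v 0 0 ^+ 2 - v 0 1 ^+ 2.
Proof.
rewrite /qf /diag1m1 mul_mx_diag mulmx_rV2_cV2 !mxE /=.
by rewrite expr0 expr1 mulr1 mulrN1 mulNr -!expr2.
Qed.

Lemma QL_diag1m1P (R : comPzRingType) (a : R) :
  QL (diag1m1 R) a <-> exists x y, x ^+ 2 - y ^+ 2 = a.
Proof.
split=> [[v <-] | [x [y <-]]]; first by exists (v 0 0), (v 0 1); rewrite qf_diag1m1.
by exists (row2 x y); rewrite qf_diag1m1 !mxE.
Qed.

Section LocalRing.
Variables (R : idomainType) (p : R).
Hypothesis p_nonunit : p \isn't a GRing.unit.
Hypothesis ndvdr_unit : forall x, ~ dvdr p x -> x \is a GRing.unit.

Lemma unimodular_local (v : 'rV[R]_2) :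
  unimodular v <-> ~ (dvdr p (v 0 0) /\ dvdr p (v 0 1)).
Proof.
split=> [[c vc1] [p_v0 p_v1] | /not_andP v_ndvdr].
  have : dvdr p 1 by rewrite -vc1 mulmx_rV2_cV2; apply: dvdr_add; apply: dvdr_mulr.
  by move/dvdr1; apply/negP.
have [k /ndvdr_unit vk_unit] : exists k, ~ dvdr p (v 0 k).
  by case: v_ndvdr; [exists 0 | exists 1].
by exists ((v 0 k)^-1 *: delta_mx k 0); rewrite -scalemxAr -colE !mxE mulVr.
Qed.

Lemma QLstar_diag1m1P (a : R) : QLstar (diag1m1 R) a <->
  a = 0 \/ exists x y, ~ (dvdr p x /\ dvdr p y) /\ x ^+ 2 - y ^+ 2 = a.
Proof.
split=> [[v [/primitiveP [-> | /unimodular_local v_ndvdr] <-]] |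
         [-> | [x [y [xy_ndvdr <-]]]]].
- by left; rewrite qf_diag1m1 !mxE expr0n subrr.
- by right; exists (v 0 0), (v 0 1); rewrite qf_diag1m1.
- by exists 0; rewrite primitiveP qf_diag1m1 !mxE expr0n subrr; split; [left|].
exists (row2 x y); rewrite qf_diag1m1 primitiveP unimodular_local !mxE.
by split; [right|].
Qed.

End LocalRing.

Section DyadicRing.
Variable R : idomainType.
Hypothesis two_prime : prime_elt (2 : R).
Hypothesis ndvdr2_unit : forall x : R, ~ dvdr 2 x -> x \is a GRing.unit.
Hypothesis sqr_mod2_surj : forall a : R, exists u, dvdr 2 (a - u ^+ 2).
Implicit Types a b x y : R.

Lemma dvdr2_addrE x y : dvdr 2 (x + y) <-> dvdr 2 (x - y).
Proof.
have two_dvdr z : dvdr 2 (2 * z) by exists z.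
split=> xy_even.
  by rewrite (_ : x - y = x + y - 2 * y); [apply: dvdr_sub | ring].
by rewrite (_ : x + y = x - y + 2 * y); [apply: dvdr_add | ring].
Qed.

Lemma dvdr2_sqrB x y : dvdr 2 (x ^+ 2 - y ^+ 2) -> dvdr 2 (x - y).
Proof.
rewrite (_ : x ^+ 2 - y ^+ 2 = (x - y) * (x + y)); last by ring.
by case/(prime_dvdrM two_prime) => // /dvdr2_addrE.
Qed.

Lemma sqrB_unit x y : ~ dvdr 2 (x - y) -> x ^+ 2 - y ^+ 2 \is a GRing.unit.
Proof.
move=> xy_odd; rewrite (_ : x ^+ 2 - y ^+ 2 = (x - y) * (x + y)); last by ring.
by rewrite unitrM !ndvdr2_unit // dvdr2_addrE.
Qed.

Lemma dvdr4_sqrB x y : dvdr 2 (x - y) -> dvdr 4 (x ^+ 2 - y ^+ 2).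
Proof.
case=> s xy_eq; exists (s * (s + y)).
by rewrite (_ : x = 2 * s + y); [ring | rewrite -xy_eq; ring].
Qed.

Lemma sqrB_unit_or_dvdr4 x y :
  x ^+ 2 - y ^+ 2 \is a GRing.unit \/ dvdr 4 (x ^+ 2 - y ^+ 2).
Proof.
have [/dvdr4_sqrB | /sqrB_unit] := pselect (dvdr 2 (x - y)); by [right | left].
Qed.

Lemma unit_sqrB_primitive a : a \is a GRing.unit ->
  exists x y, ~ (dvdr 2 x /\ dvdr 2 y) /\ x ^+ 2 - y ^+ 2 = a.
Proof.
move=> a_unit; have [u [k a_eq]] := sqr_mod2_surj a.
have u_unit : u \is a GRing.unit.
  apply: ndvdr2_unit => u_even; case: (prime_ndvdr_unit two_prime a_unit).
  rewrite (_ : a = 2 * k + u * u); last by rewrite -a_eq; ring.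
  by apply: dvdr_add; [exists k | apply: dvdr_mulr].
exists (u + k / u), (k / u); split.
  case=> x_even y_even; case: (prime_ndvdr_unit two_prime u_unit).
  by rewrite (_ : u = u + k / u - k / u); [apply: dvdr_sub | ring].
rewrite (_ : _ - _ = u * u + 2 * k * (u / u)); last by ring.
by rewrite divrr // mulr1 -a_eq; ring.
Qed.

Lemma dvdr4_sqrB_primitive a : ~ is_Z2 R -> dvdr 4 a ->
  exists x y, ~ (dvdr 2 x /\ dvdr 2 y) /\ x ^+ 2 - y ^+ 2 = a.
Proof.
move=> not_Z2 [b ->].
have [b1_even | b1_odd] := pselect (dvdr 2 (b - 1)); last first.
  by exists (b + 1), (b - 1); split=> [[_ /b1_odd] //|]; ring.
have [c [c_odd c1_odd]] : exists c : R, ~ dvdr 2 c /\ ~ dvdr 2 (c - 1).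
  apply: contrapT => no_c; apply: not_Z2 => c.
  by apply: contrapT => /not_orP c_odd; apply: no_c; exists c.
have c_unit := ndvdr2_unit c_odd.
exists (c + b / c), (b / c - c); split; last first.
  by rewrite (_ : _ - _ = 4 * b * (c / c)); [rewrite divrr // mulr1 | ring].
case=> x_even _; apply: c1_odd; apply: (prime_dvdrX (n := 2) two_prime).
rewrite (_ : (c - 1) ^+ 2 = (c + b / c) * c - 2 * c - (b - 1)); last first.
  by rewrite mulrDl -mulrA mulVr // mulr1; ring.
by apply: dvdr_sub => //; apply: dvdr_sub; [apply: dvdr_mulr | exists c].
Qed.

Lemma dvdr8_sqrB_primitive a : dvdr 8 a ->
  exists x y, ~ (dvdr 2 x /\ dvdr 2 y) /\ x ^+ 2 - y ^+ 2 = a.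
Proof.
case=> b ->; exists (1 + 2 * b), (2 * b - 1); split; last by ring.
case=> x_even _; have two_b : dvdr 2 (2 * b) by exists b.
by move: (dvdr_sub x_even two_b); rewrite addrK; apply: prime_ndvdr_unit (unitr1 R).
Qed.

Lemma Z2_dvdr2_mulS x : is_Z2 R -> dvdr 2 (x * (x + 1)).
Proof.
case/(_ x) => [/dvdr_mulr // | [k x_eq]]; apply: dvdr_mull; exists (k + 1).
by rewrite mulrDr -x_eq; ring.
Qed.

Lemma Z2_primitive_sqrB x y : is_Z2 R -> ~ (dvdr 2 x /\ dvdr 2 y) ->
  x ^+ 2 - y ^+ 2 \is a GRing.unit \/ dvdr 8 (x ^+ 2 - y ^+ 2).
Proof.
move=> Z2 xy_primitive.
have [[s xy_eq] | /sqrB_unit] := pselect (dvdr 2 (x - y)); [right | by left].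
have [y_even | [e y_eq]] := Z2 y.
  case: xy_primitive; split=> //.
  by rewrite (_ : x = x - y + y); [apply: dvdr_add => //; exists s | ring].
have [t s_eq] := Z2_dvdr2_mulS s Z2.
exists (t + s * e); rewrite (_ : x = 2 * s + y); last by rewrite -xy_eq; ring.
rewrite (_ : y = 2 * e + 1); last by rewrite -y_eq; ring.
rewrite [8 * _](_ : _ = 4 * (2 * t) + 8 * (s * e)); last by ring.
by rewrite -s_eq; ring.
Qed.

Theorem QL_diag1m1_dyadic a : QL (diag1m1 R) a <-> a \is a GRing.unit \/ dvdr 4 a.
Proof.
rewrite QL_diag1m1P; split=> [[x [y <-]] | [/unit_sqrB_primitive [x [y [_ <-]]] | [b ->]]].
- exact: sqrB_unit_or_dvdr4.
- by exists x, y.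
- by exists (b + 1), (b - 1); ring.
Qed.

Theorem QLstar_diag1m1_dyadic a : ~ is_Z2 R ->
  QLstar (diag1m1 R) a <-> a \is a GRing.unit \/ dvdr 4 a.
Proof.
move=> not_Z2; rewrite (QLstar_diag1m1P (prime_nonunit two_prime) ndvdr2_unit).
split=> [[-> | [x [y [_ <-]]]] | [/unit_sqrB_primitive | /(dvdr4_sqrB_primitive not_Z2)]].
- by right; apply: dvdr0.
- exact: sqrB_unit_or_dvdr4.
- by right.
- by right.
Qed.

Theorem QLstar_diag1m1_Z2 a : is_Z2 R ->
  QLstar (diag1m1 R) a <-> a \is a GRing.unit \/ dvdr 8 a.
Proof.
move=> Z2; rewrite (QLstar_diag1m1P (prime_nonunit two_prime) ndvdr2_unit).
split=> [[-> | [x [y [xy_primitive <-]]]] | [/unit_sqrB_primitive | /dvdr8_sqrB_primitive]].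
- by right; apply: dvdr0.
- exact: Z2_primitive_sqrB.
- by right.
- by right.
Qed.

End DyadicRing.

Theorem lemma5p1 (R : idomainType) (G : 'M[R]_2) :
  local_ring_of_integers R -> char_not_2 R -> prime_elt (2 : R) ->
  isometric_to_1m1 G ->
  (forall a : R, QL G a <-> (a \is a GRing.unit \/ dvdr 4 a)) /\
  (~ is_Z2 R -> forall a : R, QLstar G a <-> (a \is a GRing.unit \/ dvdr 4 a)) /\
  (is_Z2 R -> forall a : R, QLstar G a <-> (a \is a GRing.unit \/ dvdr 8 a)).
Proof.
(* [char_not_2 R] is implied by [prime_elt 2]. *)
move=> [pi [pi_unif [_ [s s_residues]]]] _ two_prime [P [P_unit ->]].
have ndvdr2_unit := uniformizer_ndvdr_unit two_prime pi_unif.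
have s_residues2 x : exists2 y, y \in s & dvdr 2 (x - y).
  have [y y_s pi_xy] := s_residues x; exists y => //.
  exact: dvdr_trans (prime_dvdr_uniformizer two_prime pi_unif) pi_xy.
have sqr_mod2_surj := residue_surj s_residues2 (dvdr2_sqrB two_prime).
split; [|split] => [a | not_Z2 a | Z2 a]; rewrite ?QL_isometry ?QLstar_isometry //.
- exact: QL_diag1m1_dyadic.
- exact: QLstar_diag1m1_dyadic.
- exact: QLstar_diag1m1_Z2.
Qed.
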